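(* Let $L$ be a uniquely complemented lattice that is not distributive. Then $L$ has infinite width, i.e. $L$ contains antichains of arbitrarily large finite size (there is no finite bound on the cardinality of antichains in $L$).
   Context: A uniquely complemented lattice is a bounded lattice (with least element $0$ and greatest element $1$) in which every element $x$ has exactly one complement, i.e. exactly one $y$ with $x \wedge y = 0$ and $x \vee y = 1$. The width of a lattice is the supremum of the cardinalities of its antichains (sets of pairwise incomparable elements); the lattice has finite width if this supremum is a finite number. *)

From HB Require Import structures.
From mathcomp Require Import all_boot all_order.
Set Implicit Arguments. Unset Strict Implicit. Unset Printing Implicit Defensive.
Import Order.Theory.
Local Open Scope order_scope.

Definition is_complement (d : Order.disp_t) (L : tbLatticeType d) (x y : L) : Prop :=
  x `&` y = \bot /\ x `|` y = \top.

Definition uniquely_complemented (d : Order.disp_t) (L : tbLatticeType d) : Prop :=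
  forall x : L, exists y : L, is_complement x y /\ (forall z : L, is_complement x z -> z = y).

Definition distributive_lattice (d : Order.disp_t) (L : tbLatticeType d) : Prop :=
  forall x y z : L, x `&` (y `|` z) = (x `&` y) `|` (x `&` z).

Definition antichain (d : Order.disp_t) (L : tbLatticeType d) (s : seq L) : Prop :=
  uniq s /\ forall x y : L, x \in s -> y \in s -> x != y -> ~~ (x >=< y).

Definition finite_width (d : Order.disp_t) (L : tbLatticeType d) : Prop :=
  exists n : nat, forall s : seq L, antichain s -> (size s <= n)%N.

From mathcomp Require Import all_boot all_order.
From Stdlib Require Import Classical.
Set Implicit Arguments. Unset Strict Implicit. Unset Printing Implicit Defensive.
Import Order.Theory.
Local Open Scope order_scope.

(* In a uniquely complemented lattice, if [u < y] then [y] meets the complement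
   [u'] of [u] nontrivially (else [y] would be a second complement of [u']).
   Hence below a nonzero non-atom [z] lies some [0 < y < z] together with the
   nonzero piece [z `&` y'] disjoint from [y]; iterating produces arbitrarily
   long families of pairwise disjoint nonzero elements, which are antichains.
   So finite width forces every nonzero element to lie above an atom.
   In an atomic uniquely complemented lattice the complement [p'] of an atom
   [p] is a coatom containing every other atom, so every [x] with [~~ (p <= x)]
   lies below [p']; as elements are compared through the atoms below them, an
   atom under [x `&` (y `|` z)] but under neither [y] nor [z] would lie under
   [p `&` p' = 0]. *)

Section UniquelyComplemented.

Variables (d : Order.disp_t) (L : tbLatticeType d).

Lemma is_complement_sym (x y : L) : is_complement x y -> is_complement y x.
Proof. by case=> xy0 xy1; split; rewrite 1?meetC 1?joinC. Qed.

Definition disjoint_family (s : seq L) : Prop :=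
  [/\ uniq s, forall x, x \in s -> x != \bot
    & forall x y, x \in s -> y \in s -> x != y -> x `&` y = \bot].

Lemma disjoint_family_antichain (s : seq L) : disjoint_family s -> antichain s.
Proof.
case=> uniq_s nz_s disj_s; split=> // x y xs ys /(disj_s _ _ xs ys) xy0.
apply/negP => /orP[/meet_idPl | /meet_idPr] xyE.
  by move: (nz_s x xs); rewrite -xyE xy0 eqxx.
by move: (nz_s y ys); rewrite -xyE xy0 eqxx.
Qed.

Lemma disjoint_family_cons (s : seq L) (y v : L) :
  disjoint_family s -> all (<= y) s -> v != \bot -> v `&` y = \bot ->
  disjoint_family (v :: s).
Proof.
case=> uniq_s nz_s disj_s /allP s_le_y v_nz vy0.
have v_disj a : a \in s -> a `&` v = \bot.
  move=> /s_le_y a_le_y; apply/eqP; rewrite -lex0 -vy0 meetC; exact: leI2.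
split.
- rewrite /= uniq_s andbT; apply: contra v_nz => vs.
  by rewrite -[v]meetxx v_disj.
- by move=> x; rewrite inE => /orP[/eqP -> // | /nz_s].
move=> x z; rewrite !inE => /orP[/eqP -> | xs] /orP[/eqP -> | zs] //.
- by rewrite eqxx.
- by move=> _; rewrite meetC v_disj.
- by move=> _; rewrite v_disj.
- exact: disj_s.
Qed.

Definition atom (p : L) : Prop :=
  p != \bot /\ forall y, y <= p -> y = \bot \/ y = p.

Definition atomic : Prop := forall z : L, z != \bot -> exists p, atom p /\ p <= z.

Hypothesis UC : uniquely_complemented L.

Lemma is_complement_unique (x y z : L) :
  is_complement x y -> is_complement x z -> y = z.
Proof.
by move=> xy xz; have [c [_ c_uniq]] := UC x; rewrite (c_uniq _ xy) (c_uniq _ xz).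
Qed.

Lemma meet_compl_neq0 (u y u' : L) : u < y -> is_complement u u' -> y `&` u' != \bot.
Proof.
rewrite lt_neqAle => /andP[u_neq_y u_le_y] [uu'0 uu'1]; apply/negP => /eqP yu'0.
have u'y : is_complement u' y.
  by split; rewrite 1?meetC //; apply/eqP; rewrite eq_le lex1 -uu'1 joinC leU2.
have := is_complement_unique u'y (is_complement_sym (conj uu'0 uu'1)).
by move=> yE; rewrite yE eqxx in u_neq_y.
Qed.

Lemma exists_atom_le (k : nat) (z : L) : z != \bot ->
  (forall s, disjoint_family s -> all (<= z) s -> (size s <= k)%N) ->
  exists p, atom p /\ p <= z.
Proof.
elim: k z => [|k IH] z z_nz z_bound.
  have /z_bound : disjoint_family [:: z].
    by split=> // [x|x y]; rewrite !inE => /eqP-> // /eqP->; rewrite eqxx.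
  by rewrite /= lexx => /(_ isT).
have [[y /andP[y_gt0 y_lt_z]] | no_mid] := classic (exists y, \bot < y < z); last first.
  exists z; split=> //; split=> // y y_le_z.
  have [-> | y_nz] := eqVneq y \bot; [by left | right].
  apply/eqP; apply: contraT => y_neq_z; exfalso; apply: no_mid; exists y.
  by rewrite lt0x y_nz lt_neqAle y_neq_z y_le_z.
have y_le_z := ltW y_lt_z.
have [y' [yy' _]] := UC y.
have piece_nz : z `&` y' != \bot := meet_compl_neq0 y_lt_z yy'.
have piece_disj : z `&` y' `&` y = \bot by rewrite meetC meetCA yy'.1 meetx0.
have [p [p_atom p_le_y]] : exists p, atom p /\ p <= y.
  apply: IH => [|s s_disj s_le_y]; first by rewrite -lt0x.
  have /z_bound : disjoint_family (z `&` y' :: s).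
    exact: disjoint_family_cons s_disj s_le_y piece_nz piece_disj.
  rewrite /= leIl ltnS; apply; apply/allP=> x xs.
  exact: le_trans (allP s_le_y x xs) y_le_z.
by exists p; split=> //; apply: le_trans y_le_z.
Qed.

Lemma finite_width_atomic : finite_width L -> atomic.
Proof.
case=> n n_bound z z_nz; apply: (exists_atom_le (k := n)) => // s s_disj _.
exact/n_bound/disjoint_family_antichain.
Qed.

Section Atomic.

Hypothesis atomicL : atomic.

Lemma atoms_le (x y : L) : (forall p, atom p -> p <= x -> p <= y) -> x <= y.
Proof.
move=> atoms_xy; apply/negPn/negP => x_nle_y.
have [u' [uu' _]] := UC (x `&` y).
have xy_lt_x : x `&` y < x.
  by rewrite lt_neqAle leIl andbT; apply: contraNneq x_nle_y => <-; exact: leIr.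
have [p [p_atom p_le]] := atomicL (meet_compl_neq0 xy_lt_x uu').
have p_le_x : p <= x by apply: le_trans p_le (leIl _ _).
have : p <= x `&` y `&` u'.
  by rewrite !lexI p_le_x atoms_xy //= (le_trans p_le (leIr _ _)).
by rewrite uu'.1 lex0 (negbTE p_atom.1).
Qed.

Lemma atom_compl_coatom (p p' y : L) :
  atom p -> is_complement p p' -> p' < y -> y = \top.
Proof.
move=> [_ p_min] [pp'0 pp'1]; rewrite lt_neqAle => /andP[p'_neq_y p'_le_y].
case: (p_min (y `&` p) (leIr _ _)) => [yp0 | ypE].
  have py : is_complement p y.
    by split; rewrite 1?meetC //; apply/eqP; rewrite eq_le lex1 -pp'1 leU2.
  by rewrite (is_complement_unique (conj pp'0 pp'1) py) eqxx in p'_neq_y.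
by apply/eqP; rewrite eq_le lex1 -pp'1 leUx p'_le_y -ypE leIl.
Qed.

Lemma atom_le_compl (p p' r : L) :
  atom p -> atom r -> is_complement p p' -> r != p -> r <= p'.
Proof.
move=> p_atom [r_nz r_min] pp' r_neq_p; apply/negPn/negP => r_nle_p'.
have rp'0 : r `&` p' = \bot.
  by case: (r_min _ (leIl r p')) => // rp'E; rewrite -rp'E leIr in r_nle_p'.
have rp'1 : r `|` p' = \top.
  apply: atom_compl_coatom p_atom pp' _.
  by rewrite lt_neqAle leUr andbT; apply: contraNneq r_nle_p' => ->; exact: leUl.
have := is_complement_unique (is_complement_sym (conj rp'0 rp'1)) (is_complement_sym pp').
by move=> rE; rewrite rE eqxx in r_neq_p.
Qed.

Lemma le_compl_atom (p p' x : L) :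
  atom p -> is_complement p p' -> ~~ (p <= x) -> x <= p'.
Proof.
move=> p_atom pp' p_nle_x; apply: atoms_le => r r_atom r_le_x.
by apply: atom_le_compl p_atom r_atom pp' _; apply: contraNneq p_nle_x => <-.
Qed.

Lemma atomic_distributive : distributive_lattice L.
Proof.
move=> x y z; apply/eqP; rewrite eq_le leUx !leI2 ?lexx ?leUl ?leUr // !andbT.
apply: atoms_le => p p_atom; rewrite lexI => /andP[p_le_x p_le_yz].
have [p_le_y | p_nle_y] := boolP (p <= y); first by rewrite lexUl // lexI p_le_x.
have [p_le_z | p_nle_z] := boolP (p <= z); first by rewrite lexUr // lexI p_le_x.
have [p' [pp' _]] := UC p.
have yz_le_p' : y `|` z <= p' by rewrite leUx !(le_compl_atom p_atom pp').
have : p <= p `&` p' by rewrite lexI lexx (le_trans p_le_yz yz_le_p').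
by rewrite pp'.1 lex0 (negbTE p_atom.1).
Qed.

End Atomic.

End UniquelyComplemented.

Theorem proposition7p3 (d : Order.disp_t) (L : tbLatticeType d) :
  uniquely_complemented L -> ~ distributive_lattice L -> ~ finite_width L.
Proof.
move=> UC not_distributive /(finite_width_atomic UC) atomicL.
exact/not_distributive/atomic_distributive.
Qed.
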